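(* Let $\mathcal{A}\colon\mathbb{S}^n\to\mathbb{R}^p$ and $\mathcal{B}\colon\mathbb{S}^n\to\mathbb{R}^q$ be linear, $a\in\mathbb{R}^p$, $b\in\mathbb{R}^q$, and $\mathcal{C}:=\{X\in\mathbb{S}^n_+ : \mathcal{A}(X)=a,\ \mathcal{B}(X)\le b\}$. Suppose $\mathcal{C}\cap\mathbb{S}^n_{++}\neq\emptyset$. Let $\bar X\in\mathcal{C}$ and let $P$ denote the orthogonal projection of $\mathbb{R}^q$ onto $\{z\in\mathbb{R}^q : \operatorname{supp}(z)\cap\operatorname{supp}(\mathcal{B}(\bar X)-b)=\emptyset\}$. Then \[ \dim N_{\mathcal{C}}(\bar X) = \dim(\mathbb{S}^n) - \dim\Bigl(\operatorname{Null}(\mathcal{A})\cap\operatorname{Null}(P\circ\mathcal{B})\cap \operatorname{span}\{\tfrac12(\bar X uv^{\mathsf T}+vu^{\mathsf T}\bar X) : u,v\in\mathbb{R}^n\}\Bigr). \] In particular, if $\bar X=\bar x\bar x^{\mathsf T}$ for some nonzero $\bar x\in\mathbb{R}^n$, then, with $A_i:=\mathcal{A}^*(e_i)$ for $i\in[p]$ and $B_i:=\mathcal{B}^*(e_i)$ for $i\in[q]$, \[ \dim N_{\mathcal{C}}(\bar x\bar x^{\mathsf T}) = \dim(\mathbb{S}^n) - \dim\Bigl(\bigl(\{A_i\bar x : i\in[p]\}\cup\{B_i\bar x : i\in[q]\setminus\operatorname{supp}(\mathcal{B}(\bar x\bar x^{\mathsf T})-b)\}\bigr)^{\perp}\Bigr);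 \] thus $\bar x\bar x^{\mathsf T}\in\mathcal{C}$ is a vertex of $\mathcal{C}$ if and only if $\{A_i\bar x : i\in[p]\}\cup\{B_i\bar x : i\in[q]\setminus\operatorname{supp}(\mathcal{B}(\bar x\bar x^{\mathsf T})-b)\}$ spans $\mathbb{R}^n$.
   Context: $\mathbb{S}^n$ is the space of real symmetric $n\times n$ matrices with trace inner product; $\mathbb{S}^n_+$, $\mathbb{S}^n_{++}$ are the positive semidefinite and positive definite cones. $\operatorname{supp}(z)=\{i:z_i\neq0\}$; $e_i$ are standard basis vectors. For a convex set $\mathcal{C}$ and $\bar X\in\mathcal{C}$, $N_{\mathcal{C}}(\bar X):=\{C\in\mathbb{S}^n : \langle C,X\rangle\le\langle C,\bar X\rangle\ \forall X\in\mathcal{C}\}$; $\bar X$ is a vertex of $\mathcal{C}$ if $\dim N_{\mathcal{C}}(\bar X)=\dim\mathbb{S}^n$. *)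

From HB Require Import structures.
From mathcomp Require Import all_boot all_order all_algebra.
From mathcomp Require Import boolp classical_sets reals.
Set Implicit Arguments. Unset Strict Implicit. Unset Printing Implicit Defensive.
Import Order.TTheory GRing.Theory Num.Theory.
Local Open Scope ring_scope.
Local Open Scope classical_set_scope.

Section Defs.
Variable R : realType.

Definition lin_span (vT : vectType R) (S : set vT) : set vT :=
  [set v | exists s : seq vT, (forall x, x \in s -> S x) /\ (v \in <<s>>%VS)].

(* dimension of (the linear span of) a set = max number of linearly
   independent elements of the set *)
Definition dim_set (vT : vectType R) (S : set vT) : nat :=
  (\max_(k < (\dim (fullv : {vspace vT})).+1 |
      `[< exists s : k.-tuple vT, (forall x, x \in s -> S x) /\ free s >]) k)%N.

Variable n : nat.

Definition Sym : set 'M[R]_n := [set X | X^T = X].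

Definition inner (C X : 'M[R]_n) : R := \tr (C^T *m X).

Definition psd (X : 'M[R]_n) : Prop :=
  X^T = X /\ forall v : 'cV[R]_n, 0 <= (v^T *m X *m v) 0 0.
Definition pd (X : 'M[R]_n) : Prop :=
  X^T = X /\ forall v : 'cV[R]_n, v != 0 -> 0 < (v^T *m X *m v) 0 0.

Definition normal_cone (C : set 'M[R]_n) (Xbar : 'M[R]_n) : set 'M[R]_n :=
  [set Y | Sym Y /\ forall X, C X -> inner Y X <= inner Y Xbar].

Definition is_vertex (C : set 'M[R]_n) (Xbar : 'M[R]_n) : Prop :=
  C Xbar /\ dim_set (normal_cone C Xbar) = dim_set Sym.

(* A linear map S^n -> R^m given through its adjoint images M_i = A^*(e_i):
   (A X)_i = <M_i, X> *)
Definition lmap (m : nat) (M : 'I_m -> 'M[R]_n) (X : 'M[R]_n) : 'I_m -> R :=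
  fun i => inner (M i) X.

Definition supp (m : nat) (z : 'I_m -> R) : set 'I_m := [set i | z i != 0].

Definition feas (p q : nat) (A : 'I_p -> 'M[R]_n) (a : 'I_p -> R)
  (B : 'I_q -> 'M[R]_n) (b : 'I_q -> R) : set 'M[R]_n :=
  [set X | psd X /\ lmap A X = a /\ forall i, lmap B X i <= b i].

(* orthogonal projection of R^q onto {z | supp z \cap S = empty} *)
Definition proj_off (q : nat) (S : set 'I_q) (z : 'I_q -> R) : 'I_q -> R :=
  fun i => if `[< S i >] then 0 else z i.

Definition null_of (m : nat) (f : 'M[R]_n -> ('I_m -> R)) : set 'M[R]_n :=
  [set X | Sym X /\ f X = (fun=> 0)].

Definition gens (Xbar : 'M[R]_n) : set 'M[R]_n :=
  [set Y | exists u v : 'cV[R]_n,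
     Y = 2^-1 *: (Xbar *m (u *m v^T) + v *m u^T *m Xbar)].

Definition orth (T : set 'cV[R]_n) : set 'cV[R]_n :=
  [set v | forall t, T t -> (v^T *m t) 0 0 = 0].

End Defs.

From HB Require Import structures.
From mathcomp Require Import all_boot all_order all_algebra.
From mathcomp Require Import boolp classical_sets reals.
From mathcomp Require Import ring lra zify.
Import Order.TTheory GRing.Theory Num.Theory.
Local Open Scope ring_scope.
Local Open Scope classical_set_scope.
Set Implicit Arguments. Unset Strict Implicit. Unset Printing Implicit Defensive.

(* Inside the symmetric matrices, the tangent space [{Xb M + M^T Xb}] is the orthogonal
   complement of [K = {Y | Y Xb = 0}], so the space [U] of the theorem is the orthogonal
   complement of [K + span{A i, B i (i active)}].  This sum is spanned by normal vectors:
   the constraint normals, and the matrices [- w w^T] with [Xb w = 0], which generate [K]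
   by polarization.  Conversely, the Slater point [X0] turns every [Z] in [U] into the
   velocity of a feasible curve [Xb + t Z + c t^2 (X0 - Xb)] for small [|t|], so every
   normal vector is orthogonal to [U].  When [Xb = x x^T], the injective map
   [w |-> x w^T + w x^T] carries the orthogonal complement of [{A i x, B i x}] onto [U]. *)

Lemma lfunE_linear (K : fieldType) (aT rT : vectType K) (f : aT -> rT) :
  (forall a x y, f (a *: x + y) = a *: f x + f y) -> linfun f =1 f.
Proof.
move=> f_lin x.
pose g : {linear aT -> rT} := HB.pack f (GRing.isLinear.Build _ _ _ _ f f_lin).
exact: (lfunE g).
Qed.

Section Frobenius.
Variables (R : realFieldType) (m k : nat).
Implicit Types X Y : 'M[R]_(m, k).

Definition mxdot X Y : R := \tr (X^T *m Y).

Lemma mxdotC X Y : mxdot X Y = mxdot Y X.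
Proof. by rewrite /mxdot -mxtrace_tr trmx_mul trmxK. Qed.

Fact mxdot_is_linear X : linear_for *%R (mxdot X).
Proof. by move=> a Y Z; rewrite /mxdot mulmxDr -scalemxAr mxtraceD mxtraceZ. Qed.

HB.instance Definition _ X :=
  GRing.isLinear.Build R 'M[R]_(m, k) R *%R (mxdot X) (mxdot_is_linear X).

Lemma mxdotE X Y : mxdot X Y = \sum_j \sum_i X i j * Y i j.
Proof.
rewrite /mxdot /mxtrace; apply: eq_bigr => j _; rewrite mxE.
by apply: eq_bigr => i _; rewrite mxE.
Qed.

Lemma mxdotxx_ge0 X : 0 <= mxdot X X.
Proof.
by rewrite mxdotE; apply: sumr_ge0 => j _; apply: sumr_ge0 => i _; rewrite -expr2 sqr_ge0.
Qed.

Lemma mxdotxx_eq0 X : mxdot X X = 0 -> X = 0.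
Proof.
rewrite mxdotE => /eqP; rewrite psumr_eq0 => [/allP X0|j _]; last first.
  by apply: sumr_ge0 => i _; rewrite -expr2 sqr_ge0.
apply/matrixP => i j; rewrite mxE.
move: (X0 j (mem_index_enum _)); rewrite /= psumr_eq0 => [/allP/(_ i)|i' _].
  by rewrite mem_index_enum -expr2 sqrf_eq0 => /(_ isT) /eqP.
by rewrite -expr2 sqr_ge0.
Qed.

Lemma mxdotxx_gt0 X : X != 0 -> 0 < mxdot X X.
Proof.
by move=> X_neq0; rewrite lt_def mxdotxx_ge0 andbT; apply: contra X_neq0 => /eqP/mxdotxx_eq0 ->.
Qed.

Lemma mxdot_span_eq0 (s : seq 'M[R]_(m, k)) X :
  {in s, forall x, mxdot x X = 0} -> {in <<s>>%VS, forall v, mxdot v X = 0}.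
Proof.
move=> sX v; rewrite -{1}[s]in_tupleE => /coord_span ->.
rewrite mxdotC linear_sum big1 // => i _.
by rewrite linearZ /= mxdotC sX ?mulr0 // mem_nth ?size_tuple.
Qed.

(* [orthv W V] is the orthogonal complement of [V] inside [W]. *)
Definition orth_coords (V : {vspace 'M[R]_(m, k)}) X : 'rV[R]_(\dim V) :=
  \row_i mxdot (tnth (vbasis V) i) X.

Definition orthv (W V : {vspace 'M[R]_(m, k)}) :=
  (W :&: lker (linfun (orth_coords V)))%VS.

Lemma orth_coordsE V : linfun (orth_coords V) =1 orth_coords V.
Proof. by apply: lfunE_linear => a X Y; apply/rowP => i; rewrite !mxE linearP. Qed.

Lemma orth_coords_eq0 V X :
  (orth_coords V X == 0) = [forall i, mxdot (tnth (vbasis V) i) X == 0].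
Proof.
apply/eqP/forallP => [X0 i|X0]; last by apply/rowP => i; rewrite !mxE; apply/eqP.
by apply/eqP; move/rowP: X0 => /(_ i); rewrite !mxE.
Qed.

Lemma memv_orthv W V X :
  X \in orthv W V <-> X \in W /\ {in V, forall v, mxdot v X = 0}.
Proof.
rewrite /orthv memv_cap memv_ker orth_coordsE orth_coords_eq0.
have Vspan : <<vbasis V>>%VS = V := span_basis (vbasisP V).
split=> [/andP[XW /forallP X0]|[XW X0]]; first split=> //.
  by rewrite -Vspan; apply: mxdot_span_eq0 => _ /tnthP[i ->]; apply/eqP.
by rewrite XW; apply/forallP=> i; rewrite X0 // vbasis_mem // mem_tnth.
Qed.

Lemma memv_orthv_span W (s : seq 'M[R]_(m, k)) X :
  X \in orthv W <<s>> <-> X \in W /\ {in s, forall v, mxdot v X = 0}.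
Proof.
rewrite memv_orthv; split=> -[XW X0]; split=> //; last exact: mxdot_span_eq0.
by move=> v vs; apply/X0/memv_span.
Qed.

Lemma dim_orthv W V : (V <= W)%VS -> (\dim (orthv W V) + \dim V)%N = \dim W.
Proof.
move=> VW; rewrite -(limg_ker_dim (linfun (orth_coords V)) W) -/(orthv W V).
congr (_ + _)%N; apply/eqP; rewrite eqn_leq; apply/andP; split.
  apply: leq_trans (dimvS (limgS _ VW)); rewrite limg_dim_eq //.
  apply/eqP; rewrite -subv0; apply/subvP => x /memv_capP[xV].
  rewrite memv_ker memv0 orth_coordsE orth_coords_eq0 => /forallP x0.
  have xbasis : {in vbasis V, forall v, mxdot v x = 0}.
    by move=> _ /tnthP[i ->]; apply/eqP.
  by apply/eqP/mxdotxx_eq0/(mxdot_span_eq0 xbasis); rewrite (span_basis (vbasisP V)).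
by rewrite (leq_trans (dimvS (subvf _))) // dimvf dim_matrix mul1r.
Qed.

Lemma orthvK W V : (V <= W)%VS -> orthv W (orthv W V) = V.
Proof.
move=> VW; apply/eqP; rewrite eq_sym eqEdim; apply/andP; split.
  apply/subvP => v vV; apply/memv_orthv; split; first exact: (subvP VW).
  by move=> x /memv_orthv[_ x0]; rewrite mxdotC x0.
have VWW := capvSl W (lker (linfun (orth_coords V))).
by rewrite -(leq_add2r (\dim (orthv W V))) (dim_orthv VWW) addnC (dim_orthv VW).
Qed.

Lemma orthv_eq0 W V : (V <= W)%VS -> (orthv W V == 0%VS) = (V == W).
Proof.
move=> VW; rewrite -dimv_eq0 eqEdim VW /= -(dim_orthv VW).
by rewrite -{2}[\dim V]add0n leq_add2r leqn0.
Qed.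

Lemma orthv_addv W V1 V2 : orthv W (V1 + V2) = (orthv W V1 :&: orthv W V2)%VS.
Proof.
apply/vspaceP => X; rewrite memv_cap; apply/idP/andP.
  move/memv_orthv => [XW X0]; split; apply/memv_orthv; split=> // v vV; apply: X0.
    by rewrite (subvP (addvSl _ _)).
  by rewrite (subvP (addvSr _ _)).
move=> [/memv_orthv[XW X1] /memv_orthv[_ X2]]; apply/memv_orthv; split=> //.
move=> _ /memv_addP[v1 /X1 v1X [v2 /X2 v2X ->]].
by rewrite mxdotC linearD /= !(mxdotC X) v1X v2X addr0.
Qed.

End Frobenius.

Lemma mxdot_col (R : realFieldType) m (u v : 'cV[R]_m) : mxdot u v = (u^T *m v) 0 0.
Proof. by rewrite /mxdot trace_mx11. Qed.

Lemma trmx_mul_col (R : realFieldType) m (u v : 'cV[R]_m) : u^T *m v = (mxdot u v)%:M.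
Proof. by rewrite mxdot_col [LHS]mx11_scalar. Qed.

Lemma mxdot_outer (R : realFieldType) m k (M : 'M[R]_(m, k)) (u : 'cV[R]_m) (v : 'cV[R]_k) :
  mxdot M (u *m v^T) = mxdot (M *m v) u.
Proof. by rewrite /mxdot mulmxA mxtrace_mulC trmx_mul mulmxA. Qed.

Section LinSpan.
Variables (R : realType) (vT : vectType R).
Implicit Types (S : set vT) (s : seq vT).

Lemma lin_span_sub S x : S x -> lin_span S x.
Proof.
move=> Sx; exists [:: x]; split; last exact: memv_span1.
by move=> y; rewrite inE => /eqP ->.
Qed.

Lemma lin_span0 S : lin_span S 0.
Proof. by exists [::]; split; rewrite ?mem0v. Qed.

Lemma lin_span_seq S s :
  {in s, forall x, lin_span S x} -> exists t, {in t, forall y, S y} /\ (<<s>> <= <<t>>)%VS.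
Proof.
elim: s => [|x s IHs] sS; first by exists [::]; rewrite span_nil sub0v.
have [tx [txS xtx]] := sS x (mem_head _ _).
have [t [tS st]] := IHs (fun y ys => sS y (@mem_behead _ (x :: s) y ys)).
exists (tx ++ t); split; first by move=> y; rewrite mem_cat => /orP[/txS|/tS].
by rewrite -cat1s !span_cat span_seq1 addvS // -memvE.
Qed.

Lemma lin_span_span S s :
  {in s, forall x, lin_span S x} -> {in <<s>>%VS, forall v, lin_span S v}.
Proof. by move=> /lin_span_seq[t [tS st]] v vs; exists t; split=> //; apply: subvP vs. Qed.

Lemma lin_span_comb S a x y :
  lin_span S x -> lin_span S y -> lin_span S (a *: x + y).
Proof.
move=> Sx Sy; apply: (@lin_span_span S [:: x; y]).
  by move=> z; rewrite !inE => /orP[] /eqP ->.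
by rewrite memvD ?memvZ // memv_span // !inE eqxx ?orbT.
Qed.

Lemma lin_spanZ S a x : lin_span S x -> lin_span S (a *: x).
Proof. by move=> Sx; rewrite -[_ *: _]addr0; apply: lin_span_comb (lin_span0 _). Qed.

Lemma lin_span_sum S I (r : seq I) (P : pred I) (F : I -> vT) :
  (forall i, P i -> lin_span S (F i)) -> lin_span S (\sum_(i <- r | P i) F i).
Proof.
move=> FS; elim/big_rec: _ => [|i y Pi Sy]; first exact: lin_span0.
by rewrite -[F i]scale1r; apply: lin_span_comb Sy; apply: FS.
Qed.

Lemma free_subseq_span s : exists t, [/\ {subset t <= s}, free t & <<t>>%VS = <<s>>%VS].
Proof.
elim: s => [|x s [t [ts ft tsp]]]; first by exists [::]; rewrite nil_free.
have [xt|xNt] := boolP (x \in <<t>>%VS).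
  exists t; split=> // [y /ts yt|]; first by rewrite inE yt orbT.
  by rewrite -cat1s span_cat span_seq1 -tsp; apply/esym/addv_idPr; rewrite -memvE.
exists (x :: t); split; last by rewrite -cat1s -(cat1s x s) !span_cat tsp.
  by move=> y; rewrite !inE => /orP[->|/ts ->]; rewrite ?orbT.
by rewrite free_cons xNt ft.
Qed.

Lemma dim_set_eq_dimv S (V : {vspace vT}) :
  (forall x, S x -> x \in V) -> {in V, forall v, lin_span S v} -> dim_set S = \dim V.
Proof.
move=> SV VS; apply/eqP; rewrite eqn_leq; apply/andP; split.
  apply/bigmax_leqP => i /asboolP[s [sS /eqP fs]].
  by rewrite -(size_tuple s) -fs dimvS //; apply/span_subvP => x /sS /SV.
have [t [tS Vt]] := lin_span_seq (fun x xV => VS x (vbasis_mem xV)).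
have [u [ut fu ut_span]] := free_subseq_span t.
have Vu : <<u>>%VS = V.
  apply/eqP; rewrite eqEdim; apply/andP; split; first by apply/span_subvP => x /ut /tS /SV.
  by rewrite ut_span -(span_basis (vbasisP V)) dimvS.
have sz : size u = \dim V by rewrite -Vu (eqP fu).
have ltV : (\dim V < (\dim (fullv : {vspace vT})).+1)%N by rewrite ltnS dimvS ?subvf.
apply: (@leq_bigmax_cond _ _ (fun i : 'I__ => nat_of_ord i) (Ordinal ltV)).
by apply/asboolP; exists (Tuple (introT eqP sz)); split=> // x /ut /tS.
Qed.

End LinSpan.

Lemma quadratic_ge0_discr_le (R : realFieldType) (a b c : R) :
  0 <= c -> (forall t, 0 <= a + 2 * b * t + c * t ^+ 2) -> b ^+ 2 <= a * c.
Proof.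
move=> c_ge0 quad_ge0; have [c0|c_neq0] := eqVneq c 0.
  rewrite c0 mulr0; have [b0|b_neq0] := eqVneq b 0; first by rewrite b0 expr0n.
  have := quad_ge0 (- (a + 1) / (2 * b)); rewrite c0 mul0r addr0.
  have -> : 2 * b * (- (a + 1) / (2 * b)) = - (a + 1) by field.
  lra.
have c_gt0 : 0 < c by rewrite lt_def c_neq0.
have := quad_ge0 (- b / c).
have -> : a + 2 * b * (- b / c) + c * (- b / c) ^+ 2 = a - b ^+ 2 / c by field.
by rewrite subr_ge0 ler_pdivrMr // mulrC.
Qed.

Section BilinearForm.
Variables (R : realFieldType) (n : nat).
Implicit Types (X Y M : 'M[R]_n) (v w : 'cV[R]_n).

Definition bform X v w : R := (v^T *m X *m w) 0 0.

Lemma bformDl X v1 v2 w : bform X (v1 + v2) w = bform X v1 w + bform X v2 w.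
Proof. by rewrite /bform linearD /= !mulmxDl mxE. Qed.
Lemma bformDr X v w1 w2 : bform X v (w1 + w2) = bform X v w1 + bform X v w2.
Proof. by rewrite /bform !mulmxDr mxE. Qed.
Lemma bformZl X a v w : bform X (a *: v) w = a * bform X v w.
Proof. by rewrite /bform linearZ /= -!scalemxAl mxE. Qed.
Lemma bformZr X a v w : bform X v (a *: w) = a * bform X v w.
Proof. by rewrite /bform -!scalemxAr mxE. Qed.
Lemma bformD X Y v w : bform (X + Y) v w = bform X v w + bform Y v w.
Proof. by rewrite /bform mulmxDr mulmxDl mxE. Qed.
Lemma bformZ X a v w : bform (a *: X) v w = a * bform X v w.
Proof. by rewrite /bform -scalemxAr -scalemxAl mxE. Qed.
Lemma bformB X Y v w : bform (X - Y) v w = bform X v w - bform Y v w.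
Proof. by rewrite bformD -scaleN1r bformZ mulN1r. Qed.

Lemma bformC X v w : X^T = X -> bform X v w = bform X w v.
Proof.
move=> symX; have -> : bform X v w = (v^T *m X *m w)^T 0 0 by rewrite mxE.
by rewrite !trmx_mul trmxK symX mulmxA.
Qed.

Lemma bform_mulr X M v w : bform (X *m M) v w = bform X v (M *m w).
Proof. by rewrite /bform !mulmxA. Qed.

Lemma bform_mull X M v w : bform (M^T *m X) v w = bform X (M *m v) w.
Proof. by rewrite /bform trmx_mul !mulmxA. Qed.

Lemma mxdot_rank1 X w : mxdot (w *m w^T) X = bform X w w.
Proof.
rewrite /mxdot /bform trmx_mul trmxK -mulmxA mxtrace_mulC mulmxA.
by rewrite (mxtrace_mulC (X *m w)) trace_mx11.
Qed.

Lemma bform_sqr_le X v w : X^T = X -> (forall u, 0 <= bform X u u) ->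
  bform X v w ^+ 2 <= bform X v v * bform X w w.
Proof.
move=> symX psdX; apply: quadratic_ge0_discr_le => // t.
have := psdX (v + t *: w).
by rewrite !(bformDl, bformDr, bformZl, bformZr) (bformC w v symX) expr2; lra.
Qed.

Lemma bform_le_sum_norm X v :
  bform X v v <= (\sum_i \sum_j `|X i j|) * mxdot v v.
Proof.
have bformE : bform X v v = \sum_i \sum_j v i 0 * X i j * v j 0.
  rewrite /bform mxE exchange_big; apply: eq_bigr => j _; rewrite mxE mulr_suml.
  by apply: eq_bigr => i _; rewrite !mxE.
have coord_le i : v i 0 ^+ 2 <= mxdot v v.
  rewrite mxdotE big_ord1 (bigD1 i) //= -expr2 lerDl sumr_ge0 // => l _.
  by rewrite -expr2 sqr_ge0.
rewrite bformE mulr_suml; apply: ler_sum => i _; rewrite mulr_suml.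
apply: ler_sum => j _; rewrite mulrAC.
have sqr_i := real_normK (num_real (v i 0)); have sqr_j := real_normK (num_real (v j 0)).
have := coord_le i; have := coord_le j; have := sqr_ge0 (`|v i 0| - `|v j 0|).
have := normr_ge0 (X i j); have := ler_norm (X i j * (v i 0 * v j 0)).
rewrite !normrM !expr2 in sqr_i sqr_j * => *; nra.
Qed.

End BilinearForm.

Section PositiveDefinite.
Variables (R : realType) (n : nat).
Implicit Types (X : 'M[R]_n).

Lemma pd_unitmx X : pd X -> X \in unitmx.
Proof.
move=> [_ pdX]; rewrite unitmxE unitfE; apply/negP => /det0P[u u_neq0 uX].
have := pdX u^T; rewrite trmx_eq0 u_neq0 trmxK uX mul0mx mxE => /(_ isT).
by rewrite ltxx.
Qed.

(* Cauchy-Schwarz applied to [v i = bform X v (X^-1 e_i)]. *)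
Lemma pd_coercive X : pd X ->
  exists c, 0 <= c /\ forall v, mxdot v v <= c * bform X v v.
Proof.
move=> pdX; have unitX := pd_unitmx pdX; have [symX posX] := pdX.
have psdX u : 0 <= bform X u u.
  by have [->|/posX/ltW//] := eqVneq u 0; rewrite /bform mulmx0 mxE.
pose y i : 'cV[R]_n := invmx X *m delta_mx i 0.
exists (\sum_i bform X (y i) (y i)); split; first exact: sumr_ge0.
move=> v; rewrite mxdotE big_ord1 mulr_suml; apply: ler_sum => i _.
have -> : v i 0 * v i 0 = bform X v (y i) ^+ 2.
  rewrite /y -bform_mulr mulmxV // /bform mulmx1 !mxE expr2 (bigD1 i) //=.
  by rewrite big1 ?mxE ?eqxx ?mulr1 ?addr0 // => j /negbTE ji; rewrite !mxE ji mulr0.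
by rewrite mulrC; apply: bform_sqr_le.
Qed.

End PositiveDefinite.

Section SymmetricSubspaces.
Variables (R : realFieldType) (n : nat).
Implicit Types X Y M : 'M[R]_n.

Definition symv : {vspace 'M[R]_n} := lker (linfun (fun X : 'M[R]_n => X^T - X)).

Lemma memv_symv X : (X \in symv) = (X^T == X).
Proof.
rewrite memv_ker lfunE_linear ?subr_eq0 // => a Y Z.
by rewrite linearP /= scalerBr opprD addrACA.
Qed.

Variable Xb : 'M[R]_n.
Hypothesis symXb : Xb^T = Xb.

Definition sym_mul M := Xb *m M + M^T *m Xb.

Fact sym_mul_is_linear : linear sym_mul.
Proof.
move=> a M N; rewrite /sym_mul [(_ + N)^T]linearP /= mulmxDr mulmxDl.
by rewrite -!scalemxAl -scalemxAr scalerDr addrACA.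
Qed.

HB.instance Definition _ :=
  GRing.isLinear.Build R 'M[R]_n 'M[R]_n *:%R sym_mul sym_mul_is_linear.

Lemma trmx_sym_mul M : (sym_mul M)^T = sym_mul M.
Proof. by rewrite /sym_mul linearD /= !trmx_mul trmxK symXb addrC. Qed.

Lemma mxdot_sym_mul M Y : Y^T = Y -> mxdot (sym_mul M) Y = 2 * mxdot M (Xb *m Y).
Proof.
move=> symY; rewrite /mxdot trmx_sym_mul /sym_mul mulmxDl mxtraceD mulr_natl mulr2n.
rewrite -[M^T *m Xb *m Y]mulmxA; congr (_ + _).
by rewrite -mxtrace_tr !trmx_mul symY symXb mxtrace_mulC mulmxA.
Qed.

Definition tanv : {vspace 'M[R]_n} := limg (linfun sym_mul).

Lemma memv_tanv Z : Z \in tanv <-> exists M, Z = sym_mul M.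
Proof.
split=> [/memv_imgP[M _ ->]|[M ->]]; first by exists M; rewrite lfunE.
by rewrite -lfunE memv_img ?memvf.
Qed.

Lemma tanv_sub_symv : (tanv <= symv)%VS.
Proof. by apply/subvP => _ /memv_tanv[M ->]; rewrite memv_symv trmx_sym_mul. Qed.

Definition annv : {vspace 'M[R]_n} := (symv :&: lker (linfun (mulmxr Xb)))%VS.

Lemma memv_annv Y : Y \in annv <-> Y^T = Y /\ Y *m Xb = 0.
Proof.
rewrite memv_cap memv_symv memv_ker lfunE /=.
by split=> [/andP[/eqP -> /eqP ->]|[-> ->]]; rewrite ?eqxx.
Qed.

Lemma annv_mulmx Y : Y \in annv -> Xb *m Y = 0.
Proof. by move=> /memv_annv[symY YXb]; rewrite -[LHS]trmxK trmx_mul symY symXb YXb trmx0. Qed.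

Lemma annv_orthv : annv = orthv symv tanv.
Proof.
apply/vspaceP => Y; apply/idP/idP => [YK|/memv_orthv[]].
  have [symY _] := (memv_annv Y).1 YK; apply/memv_orthv; split; first by rewrite memv_symv symY.
  by move=> _ /memv_tanv[M ->]; rewrite mxdot_sym_mul // annv_mulmx // linear0 mulr0.
rewrite memv_symv => /eqP symY Y_orth.
have : mxdot (sym_mul (Xb *m Y)) Y = 0 by apply/Y_orth/memv_tanv; exists (Xb *m Y).
rewrite mxdot_sym_mul // => /eqP; rewrite mulf_eq0 pnatr_eq0 /= => /eqP/mxdotxx_eq0 XbY.
apply/memv_annv; split=> //.
by rewrite -[LHS]trmxK trmx_mul symY symXb XbY trmx0.
Qed.

Lemma tanv_orthv : tanv = orthv symv annv.
Proof. by rewrite annv_orthv orthvK // tanv_sub_symv. Qed.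

End SymmetricSubspaces.

Section ActiveConstraints.
Variables (R : realType) (n p q : nat).
Variables (A : 'I_p -> 'M[R]_n) (B : 'I_q -> 'M[R]_n) (b : 'I_q -> R) (Xb : 'M[R]_n).
Hypotheses (symA : forall i, (A i)^T = A i) (symB : forall i, (B i)^T = B i).

Definition active i : bool := lmap B Xb i - b i == 0.

Definition constr_seq :=
  [seq A i | i <- enum 'I_p] ++ [seq B i | i <- enum 'I_q & active i].

Lemma constr_seqP Y :
  Y \in constr_seq <-> (exists i, Y = A i) \/ (exists2 i, active i & Y = B i).
Proof.
rewrite mem_cat; split=> [/orP[/mapP[i _ ->]|/mapP[i]]|[[i ->]|[i ai ->]]].
- by left; exists i.
- by rewrite mem_filter => /andP[ai _] ->; right; exists i.
- by rewrite map_f ?mem_enum.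
- by rewrite map_f ?orbT // mem_filter ai mem_enum.
Qed.

Definition constrv : {vspace 'M[R]_n} := <<constr_seq>>%VS.

Lemma constrv_sub_symv : (constrv <= symv R n)%VS.
Proof.
apply/span_subvP => Y /constr_seqP[[i ->]|[i _ ->]].
  by rewrite memv_symv symA.
by rewrite memv_symv symB.
Qed.

Lemma memv_orth_constrv X : X \in orthv (symv R n) constrv <->
  [/\ X^T = X, forall i, mxdot (A i) X = 0 & forall i, active i -> mxdot (B i) X = 0].
Proof.
rewrite memv_orthv_span memv_symv; split=> [[/eqP symX X0]|[symX XA XB]].
  by split=> // [i|i ai]; apply: X0; apply/constr_seqP; [left|right]; exists i.
by rewrite symX; split=> // Y /constr_seqP[[i ->]|[i ai ->]]; [apply: XA|apply: XB].
Qed.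

Definition facev : {vspace 'M[R]_n} := (tanv Xb :&: orthv (symv R n) constrv)%VS.

Lemma orthv_facev : Xb^T = Xb -> orthv (symv R n) facev = (annv Xb + constrv)%VS.
Proof.
move=> symXb; rewrite /facev tanv_orthv // -orthv_addv orthvK //.
by rewrite subv_add capvSl constrv_sub_symv.
Qed.

End ActiveConstraints.

Lemma mulmx_tr_sum_col (R : comPzRingType) m n k (U : 'M[R]_(m, n)) (V : 'M[R]_(k, n)) :
  \sum_j col j U *m (col j V)^T = U *m V^T.
Proof.
rewrite -[U in RHS]mulmx1 mx1_sum_delta !mulmx_sumr mulmx_suml; apply: eq_bigr => j _.
by rewrite !colE trmx_mul trmx_delta !mulmxA -(mulmxA U) mul_delta_mx.
Qed.

Section NormalConeSpan.
Variables (R : realType) (n p q : nat).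
Variables (A : 'I_p -> 'M[R]_n) (a : 'I_p -> R) (B : 'I_q -> 'M[R]_n) (b : 'I_q -> R).
Hypotheses (symA : forall i, (A i)^T = A i) (symB : forall i, (B i)^T = B i).
Variable Xb : 'M[R]_n.
Hypothesis feasXb : feas A a B b Xb.
Local Notation Nc := (normal_cone (feas A a B b) Xb).

Lemma normal_cone_A i : Nc (A i).
Proof.
split=> [|X [_ [AX _]]]; first exact: symA.
case: feasXb => _ [AXb _].
by have := congr1 (fun f => f i) AX; have := congr1 (fun f => f i) AXb; rewrite /lmap => -> ->.
Qed.

Lemma normal_cone_B i : active B b Xb i -> Nc (B i).
Proof.
move=> /eqP act_i; split=> [|X [_ [_ BX]]]; first exact: symB.
by have := BX i; move: act_i; rewrite /lmap; lra.
Qed.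

Lemma normal_cone_rank1 (w : 'cV[R]_n) : Xb *m w = 0 -> Nc (- (w *m w^T)).
Proof.
move=> Xbw; split=> [|X [[_ psdX] _]]; first by rewrite /Sym /= linearN /= trmx_mul trmxK.
rewrite -[inner _ X]/(mxdot _ X) -[inner _ Xb]/(mxdot _ Xb) !(mxdotC (- _)) !linearN /=.
rewrite -!(mxdotC (w *m w^T)) !mxdot_rank1.
by rewrite /bform -(mulmxA _ Xb) Xbw mulmx0 [X in _ <= - X]mxE oppr0 oppr_le0 psdX.
Qed.

(* Polarization: [u w^T + w u^T = (u + w)(u + w)^T - u u^T - w w^T]. *)
Lemma lin_span_normal_polar (u w : 'cV[R]_n) : Xb *m u = 0 -> Xb *m w = 0 ->
  lin_span Nc (u *m w^T + w *m u^T).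
Proof.
move=> Xbu Xbw; have Xbuw : Xb *m (u + w) = 0 by rewrite mulmxDr Xbu Xbw addr0.
have -> : u *m w^T + w *m u^T = (-1) *: (- ((u + w) *m (u + w)^T))
    + (1 *: (- (u *m u^T)) + - (w *m w^T)).
  rewrite scaleN1r opprK scale1r linearD /= mulmxDl !mulmxDr.
  by rewrite [u *m u^T + _]addrC [X in X + (- _ - _)]addrACA -opprD addrK.
by apply: lin_span_comb; last apply: lin_span_comb; apply/lin_span_sub/normal_cone_rank1.
Qed.

Hypothesis symXb : Xb^T = Xb.

(* [Y] is the average of [Y Q^T] and [Q Y^T], where [Q] projects onto the kernel of [Xb]. *)
Lemma lin_span_normal_annv Y : Y \in annv Xb -> lin_span Nc Y.
Proof.
move=> YK; have XbY := annv_mulmx symXb YK; have [symY _] := (memv_annv _ Y).1 YK.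
pose Q := 1%:M - pinvmx Xb *m Xb.
have XbQ : Xb *m Q = 0 by rewrite mulmxBr mulmx1 mulmxA mulmxKpV ?subrr.
have QY : Q *m Y = Y by rewrite mulmxBl mul1mx -mulmxA XbY mulmx0 subr0.
have -> : Y = 2^-1 *: \sum_j (col j Y *m (col j Q)^T + col j Q *m (col j Y)^T).
  rewrite big_split /= !mulmx_tr_sum_col symY -[Y *m Q^T]trmxK trmx_mul trmxK symY QY symY.
  by rewrite -mulr2n -scaler_nat scalerA mulVf ?pnatr_eq0 // scale1r.
apply/lin_spanZ/lin_span_sum => j _; apply: lin_span_normal_polar.
  by rewrite colE mulmxA XbY mul0mx.
by rewrite colE mulmxA XbQ mul0mx.
Qed.

Lemma lin_span_normal Y : Y \in (annv Xb + constrv A B b Xb)%VS -> lin_span Nc Y.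
Proof.
rewrite -{1}(span_basis (vbasisP (annv Xb))) -span_cat; apply: lin_span_span => Z.
rewrite mem_cat => /orP[/vbasis_mem/lin_span_normal_annv //|/constr_seqP].
by move=> [[i ->]|[i ai ->]]; apply: lin_span_sub; [apply: normal_cone_A|apply: normal_cone_B].
Qed.

End NormalConeSpan.

Section SmallParameter.
Variable R : realFieldType.
Implicit Types a c d g t : R.

Lemma near0_quad_le a c g : 0 < g ->
  exists2 d, 0 < d & forall t, `|t| <= d -> t * a + t ^+ 2 * c <= g.
Proof.
move=> g_gt0; pose D := g + `|a| + `|c|.
have D_gt0 : 0 < D by rewrite /D; have := normr_ge0 a; have := normr_ge0 c; lra.
exists (g / D) => [|t t_le]; first exact: divr_gt0.
have dD : g / D * D = g by rewrite mulfVK ?gt_eqF.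
have d_le1 : g / D <= 1.
  by rewrite ler_pdivrMr // mul1r /D; have := normr_ge0 a; have := normr_ge0 c; lra.
have ta : t * a <= `|t| * `|a| by rewrite -normrM ler_norm.
have tc : t ^+ 2 * c <= `|t| ^+ 2 * `|c|.
  by rewrite -normrX -normrM (le_trans (ler_norm _)) ?normrX ?real_normK ?num_real.
have s2 : `|t| ^+ 2 * `|c| <= `|t| * `|c|.
  by rewrite ler_wpM2r // expr2 ler_piMr // (le_trans t_le).
have sD : `|t| * (`|a| + `|c|) <= g / D * D.
  apply: ler_pM => //; first by rewrite addr_ge0.
  by rewrite /D -addrA lerDr ltW.
rewrite dD in sD; lra.
Qed.

Lemma lin_eq0_of_quad_le0 a c d : 0 < d ->
  (forall t, `|t| <= d -> t * a + t ^+ 2 * c <= 0) -> a = 0.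
Proof.
move=> d_gt0 quad_le0; apply/eqP; apply: contraT => a_neq0.
have a_gt0 : 0 < `|a| by rewrite normr_gt0.
pose D := `|a| + d * `|c|.
have D_gt0 : 0 < D by rewrite /D (lt_le_trans a_gt0) // lerDl mulr_ge0 // ltW.
pose e := d * `|a| / D.
have e_gt0 : 0 < e by rewrite /e !mulr_gt0 ?invr_gt0.
have eD : e * D = d * `|a| by rewrite /e mulfVK ?gt_eqF.
have e_le : `|e| <= d.
  rewrite gtr0_norm // -(ler_pM2r D_gt0) eD ler_pM2l // /D lerDl.
  by rewrite mulr_ge0 // ltW.
have e_abs : e * `|a| + e ^+ 2 * c <= 0.
  have [a_ge0|a_lt0] := leP 0 a; first by rewrite ger0_norm // quad_le0.
  by rewrite ltr0_norm // mulrN -mulNr -sqrrN quad_le0 // normrN.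
have a_le : `|a| <= e * `|c|.
  rewrite -(ler_pM2l e_gt0) mulrA -expr2.
  have := ler_norm (- c); rewrite normrN; have := sqr_ge0 e; nra.
have : d * `|a| <= d * (e * `|c|) by rewrite ler_pM2l.
rewrite /D mulrDr in eD; nra.
Qed.

Lemma near0_all (I : eqType) (s : seq I) (P : I -> R -> Prop) :
  (forall i, i \in s -> exists2 d, 0 < d & forall t, `|t| <= d -> P i t) ->
  exists2 d, 0 < d & forall t, `|t| <= d -> forall i, i \in s -> P i t.
Proof.
elim: s => [|i s IHs] Ps; first by exists 1.
have [d1 d1_gt0 P1] := Ps i (mem_head _ _).
have [d2 d2_gt0 P2] := IHs (fun j js => Ps j (@mem_behead _ (i :: s) j js)).
exists (Num.min d1 d2) => [|t]; first by rewrite lt_min d1_gt0.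
rewrite le_min => /andP[t1 t2] j; rewrite inE => /predU1P[->|js]; [exact: P1|exact: P2].
Qed.

End SmallParameter.

(* With [r = 1 - k t^2 >= 1/2], positivity of [y = r P + 2 t m] can only fail by a
   second-order amount, which the term [k t^2 x0] compensates. *)
Lemma psd_curve_arith (R : realFieldType) (P m H x0 k t : R) :
  0 <= k -> 0 <= x0 -> k * t ^+ 2 <= 2^-1 -> 2 * H <= k * x0 ->
  0 <= (1 - k * t ^+ 2) ^+ 2 * P + 2 * (1 - k * t ^+ 2) * t * m + t ^+ 2 * H ->
  0 <= P + t * (2 * m) + t ^+ 2 * (k * (x0 - P)).
Proof.
move=> k_ge0 x0_ge0 kt H_le psd_r.
have tH : t ^+ 2 * (2 * H) <= t ^+ 2 * (k * x0) by rewrite ler_wpM2l ?sqr_ge0.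
have kx0 : 0 <= k * t ^+ 2 * x0 by rewrite mulr_ge0 // mulr_ge0 // sqr_ge0.
set y := (1 - k * t ^+ 2) * P + 2 * t * m.
have ry : - (t ^+ 2 * (k * x0)) <= 2 * ((1 - k * t ^+ 2) * y) by rewrite /y; lra.
have [y_ge0|y_lt0] := leP 0 y; first by rewrite /y in y_ge0; lra.
have : (1 - k * t ^+ 2) * y <= y / 2 by nra.
by rewrite /y; lra.
Qed.

Section FeasibleCurve.
Variables (R : realType) (n p q : nat).
Variables (A : 'I_p -> 'M[R]_n) (a : 'I_p -> R) (B : 'I_q -> 'M[R]_n) (b : 'I_q -> R).
Variables (Xb X0 : 'M[R]_n).
Hypotheses (feasXb : feas A a B b Xb) (feasX0 : feas A a B b X0) (pdX0 : pd X0).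

(* The second-order term pulls the path towards the interior point [X0]. *)
Definition curve (Z : 'M[R]_n) (c t : R) := Xb + t *: Z + t ^+ 2 *: (c *: (X0 - Xb)).

Lemma mxdot_curve Y Z c t : mxdot Y (curve Z c t) =
  mxdot Y Xb + t * mxdot Y Z + t ^+ 2 * (c * (mxdot Y X0 - mxdot Y Xb)).
Proof. by rewrite /curve !linearD !linearZ /= linearN; ring. Qed.

Lemma psd_curve M : exists2 c, 0 <= c &
  forall t, c * t ^+ 2 <= 2^-1 -> psd (curve (sym_mul Xb M) c t).
Proof.
have [[symXb psdXb] _] := feasXb; have [[symX0 psdX0] _] := feasX0.
have [c0 [c0_ge0 coercive]] := pd_coercive pdX0.
pose ka := \sum_i \sum_j `|(M^T *m Xb *m M) i j|.
have ka_ge0 : 0 <= ka by apply: sumr_ge0 => i _; apply: sumr_ge0.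
have k_ge0 : 0 <= 2 * ka * c0 by rewrite !mulr_ge0.
exists (2 * ka * c0) => // t ct.
split.
  have symv_sym X : X^T = X -> X \in symv R n by rewrite memv_symv => ->.
  move: (symv_sym _ (trmx_sym_mul symXb M)); move: (sym_mul Xb M) => Z symZ.
  apply/eqP; rewrite -memv_symv /curve.
  by do ![done|apply: memvD|apply: memvZ|rewrite memvN|apply: symv_sym].
move=> v; rewrite -[_ 0 0]/(bform _ v v) /curve !bformD !bformZ bformB.
pose u := M *m v.
have -> : bform (sym_mul Xb M) v v = 2 * bform Xb v u.
  by rewrite bformD bform_mulr bform_mull (bformC u v symXb) mulr2n mulrDl mul1r.
have uu_le : bform Xb u u <= ka * c0 * bform X0 v v.
  have -> : bform Xb u u = bform (M^T *m Xb *m M) v v by rewrite bform_mulr bform_mull.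
  by apply: le_trans (bform_le_sum_norm _ _) _; rewrite -/ka -mulrA ler_wpM2l.
apply: (psd_curve_arith (H := bform Xb u u) k_ge0 (psdX0 v) ct).
  by rewrite -!mulrA ler_pM2l // mulrA.
have := psdXb ((1 - 2 * ka * c0 * t ^+ 2) *: v + t *: u).
by rewrite -[_ 0 0]/(bform _ _ _) !(bformDl, bformDr, bformZl, bformZr) (bformC u v symXb); lra.
Qed.

Lemma lmap_curve m (C : 'I_m -> 'M[R]_n) Z c t i : lmap C (curve Z c t) i =
  lmap C Xb i + t * mxdot (C i) Z + t ^+ 2 * (c * (lmap C X0 i - lmap C Xb i)).
Proof. exact: mxdot_curve. Qed.

Lemma curve_eq Z c t : (forall i, mxdot (A i) Z = 0) -> lmap A (curve Z c t) = a.
Proof.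
have [_ [AXb _]] := feasXb; have [_ [AX0 _]] := feasX0.
by move=> AZ; apply/funext => i; rewrite lmap_curve AZ AXb AX0 subrr !mulr0 !addr0.
Qed.

Lemma curve_le Z c : 0 <= c -> (forall i, active B b Xb i -> mxdot (B i) Z = 0) ->
  exists2 d, 0 < d & forall t, `|t| <= d -> forall i, lmap B (curve Z c t) i <= b i.
Proof.
have [_ [_ BXb]] := feasXb; have [_ [_ BX0]] := feasX0; move=> c_ge0 BZ.
pose feasB i t := lmap B (curve Z c t) i <= b i.
have [|d d_gt0 Bd] := @near0_all _ _ (index_enum 'I_q) feasB.
  move=> i _; rewrite /feasB; have [act_i|inact_i] := boolP (active B b Xb i).
    exists 1 => // t _; rewrite lmap_curve BZ // mulr0 addr0.
    move: act_i; rewrite /active subr_eq0 => /eqP ->.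
    have := BX0 i; have : 0 <= t ^+ 2 * c by rewrite mulr_ge0 ?sqr_ge0.
    nra.
  have slack_gt0 : 0 < b i - lmap B Xb i.
    by rewrite lt_def subr_ge0 BXb andbT; move: inact_i; rewrite /active -oppr_eq0 opprB.
  have [d d_gt0 Hd] := near0_quad_le (mxdot (B i) Z) (c * (lmap B X0 i - lmap B Xb i)) slack_gt0.
  by exists d => // t /Hd; rewrite lmap_curve; lra.
by exists d => // t /Bd Bt i; apply: Bt; rewrite mem_index_enum.
Qed.

Lemma feasible_curve Z : Z \in facev A B b Xb ->
  exists c d, [/\ 0 <= c, 0 < d & forall t, `|t| <= d -> feas A a B b (curve Z c t)].
Proof.
move=> /memv_capP[/memv_tanv[M ->] /memv_orth_constrv[_ AZ BZ]].
have [c c_ge0 psd_c] := psd_curve M.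
have half_gt0 : 0 < 2^-1 :> R by rewrite invr_gt0.
have [d1 d1_gt0 small] := near0_quad_le 0 c half_gt0.
have [d2 d2_gt0 ineq] := curve_le c_ge0 BZ.
exists c, (Num.min d1 d2); split=> // [|t]; first by rewrite lt_min d1_gt0.
rewrite le_min => /andP[t1 t2]; split; last by split; [exact: curve_eq|exact: ineq].
by apply: psd_c; have := small t t1; rewrite mulr0 add0r mulrC.
Qed.

Lemma normal_cone_sub_orthv Y : normal_cone (feas A a B b) Xb Y ->
  Y \in orthv (symv R n) (facev A B b Xb).
Proof.
move=> [symY Ymax]; apply/memv_orthv; split; first by rewrite memv_symv symY.
move=> Z /feasible_curve[c [d [c_ge0 d_gt0 feas_curve]]]; rewrite mxdotC.
apply: (lin_eq0_of_quad_le0 (c := c * (mxdot Y X0 - mxdot Y Xb)) d_gt0) => t.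
move/feas_curve/Ymax; rewrite -[inner _ (curve _ _ _)]/(mxdot Y (curve Z c t)).
by rewrite -[inner _ Xb]/(mxdot Y Xb) mxdot_curve; lra.
Qed.

End FeasibleCurve.

Section NormalConeDimension.
Variables (R : realType) (n p q : nat).
Variables (A : 'I_p -> 'M[R]_n) (a : 'I_p -> R) (B : 'I_q -> 'M[R]_n) (b : 'I_q -> R).
Hypotheses (symA : forall i, (A i)^T = A i) (symB : forall i, (B i)^T = B i).
Hypothesis slater : exists X0, feas A a B b X0 /\ pd X0.

Lemma dim_set_Sym : dim_set (@Sym R n) = \dim (symv R n).
Proof.
apply: dim_set_eq_dimv => X; rewrite memv_symv; first by move=> symX; apply/eqP.
by move=> /eqP; apply: lin_span_sub.
Qed.

Lemma lin_span_gens (Xb : 'M[R]_n) X : lin_span (gens Xb) X <-> X \in tanv Xb.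
Proof.
have gensE u v : 2^-1 *: (Xb *m (u *m v^T) + v *m u^T *m Xb) = sym_mul Xb (2^-1 *: (u *m v^T)).
  by rewrite /sym_mul !linearZ /= trmx_mul trmxK -scalemxAl scalerDr.
split=> [[s [sgens Xs]]|/memv_tanv[M ->]].
  apply: subvP Xs; apply/span_subvP => _ /sgens[u [v ->]].
  by rewrite gensE; apply/memv_tanv; eexists.
have -> : sym_mul Xb M = \sum_i \sum_j M i j *: sym_mul Xb (delta_mx i j).
  rewrite {1}(matrix_sum_delta M) linear_sum; apply: eq_bigr => i _.
  by rewrite linear_sum; apply: eq_bigr => j _; rewrite linearZ.
apply: lin_span_sum => i _; apply: lin_span_sum => j _; apply: lin_spanZ.
pose e k : 'cV[R]_n := delta_mx k 0.
have -> : sym_mul Xb (delta_mx i j) =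
    2 *: (2^-1 *: (Xb *m (e i *m (e j)^T) + e j *m (e i)^T *m Xb)).
  by rewrite gensE linearZ scalerA divff ?pnatr_eq0 // scale1r trmx_delta mul_delta_mx.
by apply/lin_spanZ/lin_span_sub; do 2 eexists.
Qed.

Definition face_set (Xb : 'M[R]_n) : set 'M[R]_n :=
  null_of (lmap A) `&`
  null_of (fun X => proj_off (supp (fun i => (lmap B Xb i - b i)%R)) (lmap B X)) `&`
  lin_span (gens Xb).

Lemma proj_off_supp Xb (z : 'I_q -> R) i :
  proj_off (supp (fun j => lmap B Xb j - b j)) z i = if active B b Xb i then z i else 0.
Proof. by rewrite /proj_off /supp /= asboolb /active; case: eqP. Qed.

Lemma face_setP Xb X : face_set Xb X <-> X \in facev A B b Xb.
Proof.
rewrite memv_cap -(rwP andP) memv_orth_constrv -lin_span_gens.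
split=> [[[[symX AX] [_ BX]] XG]|[XG [symX AX BX]]].
  split=> //; split=> // [i|i act_i]; first by have := congr1 (fun f => f i) AX.
  by have := congr1 (fun f => f i) BX; rewrite /= proj_off_supp act_i.
split=> //; split; split=> //; apply/funext => i /=; first exact: AX.
by rewrite proj_off_supp; case: ifP => // /BX.
Qed.

Lemma dim_set_face Xb : dim_set (face_set Xb) = \dim (facev A B b Xb).
Proof. by apply: dim_set_eq_dimv => [X /face_setP //|X /face_setP/lin_span_sub]. Qed.

Lemma dim_normal_cone Xb : feas A a B b Xb ->
  dim_set (normal_cone (feas A a B b) Xb) = (\dim (symv R n) - \dim (facev A B b Xb))%N.
Proof.
move=> feasXb; have [X0 [feasX0 pdX0]] := slater; have [[symXb _] _] := feasXb.
have face_sym : (facev A B b Xb <= symv R n)%VS.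
  exact: subv_trans (capvSl _ _) (tanv_sub_symv symXb).
have normalE := orthv_facev b symA symB symXb.
rewrite -(dim_orthv face_sym) addnK normalE.
apply: dim_set_eq_dimv => [Y NY|]; last exact: lin_span_normal.
by rewrite -normalE; apply: normal_cone_sub_orthv feasX0 pdX0 Y NY.
Qed.

End NormalConeDimension.

Section SymOuter.
Variables (R : realFieldType) (n : nat) (x : 'cV[R]_n).
Hypothesis x_neq0 : x != 0.
Implicit Types (w : 'cV[R]_n) (M : 'M[R]_n).

Definition sym_outer w : 'M[R]_n := x *m w^T + w *m x^T.

Fact sym_outer_is_linear : linear sym_outer.
Proof.
move=> c u v; rewrite /sym_outer linearP /= mulmxDr mulmxDl -scalemxAl -scalemxAr.
by rewrite scalerDr addrACA.
Qed.

HB.instance Definition _ :=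
  GRing.isLinear.Build R 'cV[R]_n 'M[R]_n *:%R sym_outer sym_outer_is_linear.

Lemma mxdot_sym_outer M w : M^T = M -> mxdot M (sym_outer w) = 2 * mxdot (M *m x) w.
Proof.
move=> symM; rewrite /sym_outer linearD /= !mxdot_outer mulr_natl mulr2n mxdotC.
by rewrite /mxdot trmx_mul symM mulmxA.
Qed.

Lemma sym_mul_rank1 M : sym_mul (x *m x^T) M = sym_outer (M^T *m x).
Proof. by rewrite /sym_mul /sym_outer trmx_mul trmxK !mulmxA. Qed.

Lemma sym_outer_sym_mul w :
  sym_outer w = sym_mul (x *m x^T) ((mxdot x x)^-1 *: (x *m w^T)).
Proof.
have xxTM (u : 'cV[R]_n) : u *m x^T *m (x *m x^T) = mxdot x x *: (u *m x^T).
  by rewrite mulmxA -(mulmxA u) trmx_mul_col mul_mx_scalar scalemxAl.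
rewrite linearZ /= /sym_mul /sym_outer trmx_mul trmxK mulmxA xxTM.
rewrite -(mulmxA x) trmx_mul_col mul_mx_scalar -scalemxAl -scalerDr.
by rewrite scalerA mulVf ?scale1r // gt_eqF ?mxdotxx_gt0.
Qed.

Lemma lker_sym_outer : lker (linfun sym_outer) = 0%VS.
Proof.
apply/eqP; rewrite -subv0; apply/subvP => w; rewrite memv_ker lfunE memv0 => /eqP w0.
have s_gt0 := mxdotxx_gt0 x_neq0.
have xw_eq : mxdot w x *: x + mxdot x x *: w = 0.
  have := congr1 (fun M : 'M[R]_n => M *m x) w0; rewrite mul0mx /sym_outer mulmxDl.
  by rewrite -!mulmxA !trmx_mul_col !mul_mx_scalar.
have wx0 : mxdot w x = 0.
  move/(congr1 (mxdot x)): xw_eq; rewrite linear0 linearD !linearZ /= (mxdotC x w).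
  move=> wx_eq; have /eqP : mxdot w x * (2 * mxdot x x) = 0 by lra.
  by rewrite mulf_eq0 mulf_eq0 pnatr_eq0 (gt_eqF s_gt0) /= orbF => /eqP.
by move: xw_eq; rewrite wx0 scale0r add0r => /eqP; rewrite scaler_eq0 (gt_eqF s_gt0).
Qed.

End SymOuter.

Section RankOne.
Variables (R : realType) (n p q : nat).
Variables (A : 'I_p -> 'M[R]_n) (a : 'I_p -> R) (B : 'I_q -> 'M[R]_n) (b : 'I_q -> R).
Hypotheses (symA : forall i, (A i)^T = A i) (symB : forall i, (B i)^T = B i).
Variable x : 'cV[R]_n.
Hypothesis x_neq0 : x != 0.
Local Notation Xb := (x *m x^T).

Definition rank1_gens : set 'cV[R]_n :=
  [set y | (exists i, y = A i *m x) \/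
           (exists i, ~ supp (fun j => (lmap B Xb j - b j)%R) i /\ y = B i *m x)].

Definition rank1_seq := [seq Y *m x | Y <- constr_seq A B b Xb].

Lemma rank1_gensP y : rank1_gens y <-> y \in rank1_seq.
Proof.
have suppN i : ~ supp (fun j => lmap B Xb j - b j) i <-> active B b Xb i.
  by rewrite /supp /active /=; split=> [/negP|/eqP ->]; rewrite ?negbK ?eqxx.
split=> [[[i ->]|[i [/suppN act_i ->]]]|/mapP[Y /constr_seqP[[i ->]|[i act_i ->]] ->]].
- by apply: map_f; apply/constr_seqP; left; exists i.
- by apply: map_f; apply/constr_seqP; right; exists i.
- by left; exists i.
- by right; exists i; split=> //; apply/suppN.
Qed.

Lemma lin_span_rank1_gens y : lin_span rank1_gens y <-> y \in <<rank1_seq>>%VS.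
Proof.
split=> [[s [sT ys]]|y_span]; last by exists rank1_seq; split=> // z /rank1_gensP.
by apply: subvP ys; apply/span_subvP => z /sT/rank1_gensP/memv_span.
Qed.

Lemma orth_rank1_gens y : orth rank1_gens y <-> y \in orthv fullv <<rank1_seq>>.
Proof.
rewrite memv_orthv_span; split=> [y_orth|[_ y_orth] z /rank1_gensP/y_orth].
  by split=> [|z /rank1_gensP/y_orth]; rewrite ?memvf // mxdotC mxdot_col.
by rewrite mxdotC mxdot_col.
Qed.

Lemma dim_set_orth_rank1_gens :
  dim_set (orth rank1_gens) = \dim (orthv fullv <<rank1_seq>>).
Proof.
by apply: dim_set_eq_dimv => [y /orth_rank1_gens //|y /orth_rank1_gens/lin_span_sub].
Qed.

Lemma memv_orth_rank1 w :
  (w \in orthv fullv <<rank1_seq>>) = (sym_outer x w \in orthv (symv R n) (constrv A B b Xb)).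
Proof.
have constr_sym Y : Y \in constr_seq A B b Xb -> Y^T = Y.
  by move=> /constr_seqP[[i ->]|[i _ ->]].
apply/idP/idP => [/memv_orthv_span[_ w_orth]|/memv_orthv_span[_ w_orth]].
  apply/memv_orthv_span; split.
    by rewrite memv_symv /sym_outer linearD /= !trmx_mul !trmxK addrC.
  by move=> Y YC; rewrite mxdot_sym_outer ?constr_sym // w_orth ?mulr0 //; apply: map_f.
apply/memv_orthv_span; split=> [|_ /mapP[Y YC ->]]; first exact: memvf.
by have /eqP := w_orth Y YC; rewrite mxdot_sym_outer ?constr_sym // mulf_eq0 pnatr_eq0 => /eqP.
Qed.

Lemma facev_rank1 : facev A B b Xb = (linfun (sym_outer x) @: orthv fullv <<rank1_seq>>)%VS.
Proof.
apply/vspaceP => Z; rewrite memv_cap; apply/andP/memv_imgP.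
  move=> [/memv_tanv[M ->] Z_orth]; exists (M^T *m x); last by rewrite lfunE sym_mul_rank1.
  by rewrite memv_orth_rank1 -sym_mul_rank1.
move=> [w w_orth ->]; rewrite lfunE -memv_orth_rank1; split=> //.
by apply/memv_tanv; eexists; apply: sym_outer_sym_mul.
Qed.

Lemma dim_facev_rank1 : \dim (facev A B b Xb) = \dim (orthv fullv <<rank1_seq>>).
Proof. by rewrite facev_rank1 limg_dim_eq // lker_sym_outer // capv0. Qed.

Hypothesis slater : exists X0, feas A a B b X0 /\ pd X0.
Hypothesis feasXb : feas A a B b Xb.

Lemma dim_normal_cone_rank1 : dim_set (normal_cone (feas A a B b) Xb) =
  (dim_set (@Sym R n) - dim_set (orth rank1_gens))%N.
Proof. by rewrite dim_normal_cone // dim_set_Sym dim_facev_rank1 dim_set_orth_rank1_gens. Qed.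

Lemma is_vertex_rank1 : is_vertex (feas A a B b) Xb <-> lin_span rank1_gens = setT.
Proof.
have face_le : (\dim (orthv fullv <<rank1_seq>>) <= \dim (symv R n))%N.
  rewrite -dim_facev_rank1 dimvS // (subv_trans (capvSl _ _)) // tanv_sub_symv //.
  by rewrite trmx_mul trmxK.
have -> : lin_span rank1_gens = setT <-> <<rank1_seq>>%VS = fullv.
  split=> [span_full|span_full].
    by apply/vspaceP => y; rewrite memvf; apply/lin_span_rank1_gens; rewrite span_full.
  apply/funext => y; apply/propext; split=> // _.
  by apply/lin_span_rank1_gens; rewrite span_full memvf.
have -> : <<rank1_seq>>%VS = fullv <-> \dim (orthv fullv <<rank1_seq>>) = 0%N.
  split=> [span_full|/eqP]; last by rewrite dimv_eq0 orthv_eq0 ?subvf // => /eqP.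
  by apply/eqP; rewrite dimv_eq0 orthv_eq0 ?subvf // span_full.
rewrite /is_vertex dim_normal_cone_rank1 dim_set_Sym dim_set_orth_rank1_gens.
by split=> [[_]|d0]; [lia|rewrite d0 subn0].
Qed.

End RankOne.

Theorem theorem2p9 (R : realType) (n p q : nat)
  (A : 'I_p -> 'M[R]_n) (a : 'I_p -> R)
  (B : 'I_q -> 'M[R]_n) (b : 'I_q -> R) :
  (forall i, (A i)^T = A i) -> (forall i, (B i)^T = B i) ->
  (exists X0, feas A a B b X0 /\ pd X0) ->
  (forall Xbar : 'M[R]_n, feas A a B b Xbar ->
     dim_set (normal_cone (feas A a B b) Xbar) =
     (dim_set (@Sym R n) -
      dim_set (null_of (lmap A) `&`
               null_of (fun X => proj_off (supp (fun i => (lmap B Xbar i - b i)%R))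
                                          (lmap B X)) `&`
               lin_span (gens Xbar)))%N)
  /\
  (forall xbar : 'cV[R]_n, xbar != 0 -> feas A a B b (xbar *m xbar^T) ->
     let T : set 'cV[R]_n :=
       [set y | (exists i, y = A i *m xbar) \/
                (exists i, ~ supp (fun j => (lmap B (xbar *m xbar^T) j - b j)%R) i
                           /\ y = B i *m xbar)] in
     dim_set (normal_cone (feas A a B b) (xbar *m xbar^T)) =
       (dim_set (@Sym R n) - dim_set (orth T))%N
     /\
     (is_vertex (feas A a B b) (xbar *m xbar^T) <->
      lin_span T = setT)).
Proof.
move=> symA symB slater; split=> [Xb feasXb|x x_neq0 feasXb].
  by rewrite dim_normal_cone // dim_set_Sym -(dim_set_face A B b Xb).
split; first exact: dim_normal_cone_rank1.
exact: is_vertex_rank1.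
Qed.
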